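(* There are no fixed points in $\mathcal{M}_k$ under the action of a phase $P(\omega)$, where $\omega\in(-\pi,\pi)\setminus\{0\}$.
   Context: Monad matrices are $(A,B,C,D)$ with $A,B\in Mat_{k\times k}(\mathbb{C})$, $C\in Mat_{k\times 2}(\mathbb{C})$, $D\in Mat_{2\times k}(\mathbb{C})$, satisfying $[A,B]+CD=0$ and the full-rank conditions that $\begin{pmatrix}A-y\mathbb{1}_k\\ B-x\mathbb{1}_k\\ D\end{pmatrix}$ is injective and $\begin{pmatrix}x\mathbb{1}_k-B & A-y\mathbb{1}_k & C\end{pmatrix}$ is surjective for all $x,y\in\mathbb{C}$. $\mathcal{M}_k$ is the moduli space of non-singular monad matrices (those with $A\in GL(k,\mathbb{C})$) modulo $(A,B,C,D)\sim(gAg^{-1},gBg^{-1},gC,Dg^{-1})$, $g\in GL(k,\mathbb{C})$; it is identified with the moduli space of $(k,k)$-calorons. The phase $P(\omega)$ acts by $(A,B,C,D)\mapsto(A,B,Cq_\omega^{-1},q_\omega D)$ with $q_\omega=\mathrm{diag}(e^{-\imath\omega},e^{\imath\omega})$. *)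

From HB Require Import structures.
From mathcomp Require Import all_boot all_order all_algebra.
From mathcomp Require Import reals trigo.
From mathcomp.real_closed Require Import complex.
Set Implicit Arguments. Unset Strict Implicit. Unset Printing Implicit Defensive.
Import Order.TTheory GRing.Theory Num.Theory.
Local Open Scope ring_scope.
Local Open Scope complex_scope.

Section Monad.
Variable R : realType.
Notation C := (R[i]).

Definition expi (w : R) : C := (cos w +i* sin w).

Definition qmat (w : R) : 'M[C]_2 := diag_mx (\row_(j < 2) if j == 0 then expi (- w) else expi w).

Record monad (k : nat) := Monad {
  mA : 'M[C]_k; mB : 'M[C]_k; mC : 'M[C]_(k, 2); mD : 'M[C]_(2, k) }.

Definition monad_eq k (M : monad k) : Prop :=
  mA M *m mB M - mB M *m mA M + mC M *m mD M = 0.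

Definition monad_injective k (M : monad k) : Prop :=
  forall x y : C, forall v : 'cV[C]_k,
    col_mx (mA M - y%:M) (col_mx (mB M - x%:M) (mD M)) *m v = 0 -> v = 0.

Definition monad_surjective k (M : monad k) : Prop :=
  forall x y : C, forall w : 'cV[C]_k, exists u : 'cV[C]_(k + (k + 2)),
    row_mx (x%:M - mB M) (row_mx (mA M - y%:M) (mC M)) *m u = w.

Definition monad_matrices k (M : monad k) : Prop :=
  [/\ monad_eq M, monad_injective M & monad_surjective M].

Definition nonsingular_monad k (M : monad k) : Prop :=
  monad_matrices M /\ mA M \in unitmx.

Definition monad_equiv k (M N : monad k) : Prop :=
  exists g : 'M[C]_k, [/\ g \in unitmx,
    mA N = g *m mA M *m invmx g, mB N = g *m mB M *m invmx g,
    mC N = g *m mC M & mD N = mD M *m invmx g].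

Definition phase k (w : R) (M : monad k) : monad k :=
  Monad (mA M) (mB M) (mC M *m invmx (qmat w)) (qmat w *m mD M).

End Monad.

From HB Require Import structures.
From mathcomp Require Import all_boot all_order all_algebra.
From mathcomp Require Import reals trigo.
From mathcomp.real_closed Require Import complex.
From mathcomp Require Import lra.
Set Implicit Arguments. Unset Strict Implicit. Unset Printing Implicit Defensive.
Import Order.TTheory GRing.Theory Num.Theory.
Local Open Scope ring_scope.

(* If g realises P(w) M ~ M, then g commutes with A and B and intertwines C and
   D with the diagonal matrix q_w, whose eigenvalues e^{-iw} and e^{iw} differ.
   If D = 0 then [A,B] = 0, and a common eigenvector of A and B lies in ker D,
   contradicting injectivity.  Otherwise some row D_i is nonzero and lies in the
   eigenspace S of g (acting on row vectors) for the i-th eigenvalue of q_w.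
   S is stable under A and B, and on S the commutator [A,B] = -CD is the
   rank-one map x |-> -(x C_i) D_i.  Two matrices whose commutator is rank one
   on a stable S, with image in S, have a common eigenvector in S killed by the
   functional (induction on dim S); here it is a row vector u with u C = 0,
   contradicting surjectivity. *)

Lemma col_mul (R : pzRingType) m n p j (X : 'M[R]_(m, n)) (Y : 'M_(n, p)) :
  col j (X *m Y) = X *m col j Y.
Proof. by rewrite !colE mulmxA. Qed.

Lemma stablemx_mulmx_comm (F : fieldType) m n (S : 'M[F]_(m, n)) (f g : 'M_n) :
  stablemx S f -> comm_mx f g -> stablemx (S *m g) f.
Proof. by move=> Sf fg; rewrite -mulmxA -fg mulmxA submxMr. Qed.

Lemma eigenspace_mulmx_commutator (F : fieldType) n (A B : 'M[F]_n) a m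
    (X : 'M_(m, n)) :
  (X <= eigenspace A a)%MS ->
  X *m B *m (A - a%:M) = - (X *m (A *m B - B *m A)).
Proof.
move/eigenspaceP=> XA.
by rewrite mulmxBr mul_mx_scalar !mulmxBr !mulmxA XA -scalemxAl opprB.
Qed.

Section ClosedField.
Variable F : closedFieldType.

Lemma stablemx_eigenvalue n (S A : 'M[F]_n) :
  S != 0 -> stablemx S A -> exists a, (S :&: eigenspace A a)%MS != 0.
Proof.
move=> S_neq0 SA; have : size (char_poly (restrictmx S A)) != 1%N.
  by rewrite size_char_poly eqSS mxrank_eq0.
case/closed_rootP=> a; rewrite -eigenvalue_root_char.
case/eigenvalueP=> x xA x_neq0.
exists a; apply/rowV0Pn; exists (x *m row_base S); last first.
  by rewrite mulmx_free_eq0 ?row_base_free.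
rewrite sub_capmx -sub_eigenspace_conjmx ?stablemx_row_base ?row_base_free //.
by rewrite -(eq_row_base S) submxMl; apply/eigenspaceP.
Qed.

Lemma comm_mx_common_eigenvector n (A B : 'M[F]_n) :
  (0 < n)%N -> comm_mx A B ->
  exists2 v : 'rV_n, v != 0 & stablemx v A && stablemx v B.
Proof.
move=> n_gt0 AB.
have [a] : exists a, (1%:M :&: eigenspace A a)%MS != 0.
  by apply: stablemx_eigenvalue (submx1 _); rewrite -mxrank_eq0 mxrank1 -lt0n.
rewrite cap1mx => Ea_neq0.
have [b /rowV0Pn[v]] :=
  stablemx_eigenvalue Ea_neq0 (comm_mx_stable_eigenspace a AB).
rewrite sub_capmx => /andP[vA vB] v_neq0.
by exists v => //; apply/andP; split; apply/eigenvectorP; [exists a | exists b].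
Qed.
End ClosedField.

Section RankOneCommutator.
Variables (F : closedFieldType) (k : nat) (A B : 'M[F]_k).
Variables (p : 'cV[F]_k) (c : 'rV[F]_k).
Hypothesis c_neq0 : c != 0.

Local Notation K := (A *m B - B *m A).

Lemma rank_one_commutator_sub m (S : 'M_k) (X : 'M_(m, k)) :
  S *m K = S *m p *m c -> (X <= S)%MS -> X *m K = X *m p *m c.
Proof. by move=> SK /submxP[Y ->]; rewrite -mulmxA SK !mulmxA. Qed.

Lemma rank_one_commutator_line_sub (S : 'M_k) a :
  S *m K = S *m p *m c -> stablemx S B ->
  (S :&: eigenspace A a)%MS *m p != 0 -> (c <= S *m (A - a%:M))%MS.
Proof.
(* For e in the a-eigenspace of A, e B (A - a) = - e K = - (e p) c. *)
move=> SK SB /rowV0Pn[_ /submxP[y ->]]; rewrite mulmxA.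
set e := y *m (S :&: eigenspace A a)%MS => ep_neq0.
have eS : (e <= S)%MS := submx_trans (submxMl _ _) (capmxSl _ _).
have eA : (e <= eigenspace A a)%MS := submx_trans (submxMl _ _) (capmxSr _ _).
have ep00_neq0 : (e *m p) 0 0 != 0.
  by apply: contraNneq ep_neq0 => ep0; rewrite [e *m p]mx11_scalar ep0 raddf0.
rewrite -(eqmx_scale _ ep00_neq0) -mul_scalar_mx -mx11_scalar.
rewrite -(rank_one_commutator_sub SK eS) -[e *m K]opprK.
rewrite -(eigenspace_mulmx_commutator _ eA) eqmx_opp submxMr //.
exact: submx_trans (submxMr B eS) SB.
Qed.

Lemma rank_one_commutator_eigenspace_stable (S : 'M_k) a :
  S *m K = S *m p *m c -> stablemx S B ->
  (S :&: eigenspace A a)%MS *m p = 0 -> stablemx (S :&: eigenspace A a)%MS B.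
Proof.
move=> SK SB Ep0; have ES := capmxSl S (eigenspace A a).
rewrite sub_capmx (submx_trans (submxMr B ES) SB); apply/sub_kermxP.
rewrite eigenspace_mulmx_commutator ?capmxSr //.
by rewrite (rank_one_commutator_sub SK ES) Ep0 mul0mx oppr0.
Qed.

Lemma rank_one_commutator_common_eigenvector (S : 'M_k) :
  (c <= S)%MS -> stablemx S A -> stablemx S B -> S *m K = S *m p *m c ->
  exists2 v : 'rV_k, v != 0 &
    [/\ (v <= S)%MS, v *m p = 0, stablemx v A & stablemx v B].
Proof.
(* Let E be an eigenspace of A inside S.  If p vanishes on
   E, then B stabilises E and has an eigenvector there; otherwise S (A - a) is a
   smaller stable subspace that still contains c. *)
have [n] := ubnP (\rank S); elim: n S => // n IHn S; rewrite ltnS => rankS.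
move=> cS SA SB SK.
have S_neq0 : S != 0 by apply: contraNneq c_neq0 => S0; rewrite -submx0 -S0.
have [a Ea_neq0] := stablemx_eigenvalue S_neq0 SA.
set E := (S :&: eigenspace A a)%MS in Ea_neq0.
have ES : (E <= S)%MS := capmxSl _ _.
have EA : (E <= eigenspace A a)%MS := capmxSr _ _.
have [Ep0 | Ep_neq0] := eqVneq (E *m p) 0.
  have EB := rank_one_commutator_eigenspace_stable SK SB Ep0.
  have [b /rowV0Pn[v]] := stablemx_eigenvalue Ea_neq0 EB.
  rewrite sub_capmx => /andP[vE vB] v_neq0; exists v => //; split.
  - exact: submx_trans vE ES.
  - by case/submxP: vE => y ->; rewrite -mulmxA Ep0 mulmx0.
  - by apply/eigenvectorP; exists a; apply: submx_trans vE EA.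
  - by apply/eigenvectorP; exists b.
set S' := S *m (A - a%:M).
have S'S : (S' <= S)%MS by rewrite stablemxD ?stablemxN ?stablemxC.
have cS' : (c <= S')%MS := rank_one_commutator_line_sub SK SB Ep_neq0.
have [v v_neq0 [vS' vp vA vB]] : exists2 v : 'rV_k, v != 0 &
    [/\ (v <= S')%MS, v *m p = 0, stablemx v A & stablemx v B].
  apply: IHn => //.
  - apply: leq_trans rankS; rewrite -(mxrank_mul_ker S (A - a%:M)) -/S'.
    by rewrite -addn1 leq_add2l lt0n mxrank_eq0.
  - apply: stablemx_mulmx_comm => //.
    exact/comm_mxB/comm_mx_scalar/comm_mx_refl.
  - have -> : S' *m B = S *m B *m (A - a%:M) + S *m K.
      rewrite /S' !mulmxBr !mulmxA !mul_mx_scalar mulmxBl -scalemxAl.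
      by rewrite [RHS]addrC addrA subrK.
    by rewrite addmx_sub ?submxMr // SK (submx_trans (submxMl _ _) cS').
  - exact: rank_one_commutator_sub SK S'S.
by exists v => //; split => //; apply: submx_trans vS' S'S.
Qed.
End RankOneCommutator.

Lemma diag_intertwined_common_eigenvector (F : closedFieldType) k n
    (A B G : 'M[F]_k) (P : 'M_(k, n)) (Q : 'M_(n, k)) (d : 'rV_n) :
  injective (d 0) -> comm_mx G A -> comm_mx G B ->
  G *m P = P *m diag_mx d -> Q *m G = diag_mx d *m Q ->
  A *m B - B *m A + P *m Q = 0 -> Q != 0 ->
  exists2 v : 'rV_k, v != 0 & [/\ v *m P = 0, stablemx v A & stablemx v B].
Proof.
move=> d_inj GA GB GP QG ABPQ Q_neq0.
have [i Qi_neq0] : exists i, row i Q != 0.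
  apply/existsP; apply: contraNT Q_neq0 => /existsPn Q0.
  by apply/eqP/row_matrixP => i; rewrite row0; apply/eqP/negPn/Q0.
set S := eigenspace G (d 0 i).
have SP0 m (X : 'M_(m, k)) a r : (X <= S)%MS -> r != i -> (X *m P) a r = 0.
  move/eigenspaceP=> XG ri.
  have : X *m P *m diag_mx d = d 0 i *: (X *m P).
    by rewrite -mulmxA -GP mulmxA XG scalemxAl.
  move: (X *m P) => Y /matrixP/(_ a r); rewrite mul_mx_diag !mxE => /eqP.
  rewrite mulrC -subr_eq0 -mulrBl mulf_eq0 subr_eq0 (inj_eq d_inj) (negPf ri).
  by move/eqP.
have SK : S *m (A *m B - B *m A) = S *m (- col i P) *m row i Q.
  have -> : A *m B - B *m A = - (P *m Q) by apply/eqP; rewrite -addr_eq0 ABPQ.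
  rewrite !mulmxN mulNmx mulmxA; congr (- _); apply/matrixP => a b.
  rewrite !mxE big_ord1 (bigD1 i) //= big1 ?addr0 => [|r ri].
    by rewrite -col_mul !mxE.
  by rewrite SP0 ?mul0r.
have QiS : (row i Q <= S)%MS.
  apply/eigenspaceP; rewrite -row_mul QG.
  by apply/rowP => j; rewrite mul_diag_mx !mxE.
have [v v_neq0 [vS vP vA vB]] := rank_one_commutator_common_eigenvector Qi_neq0
  QiS (comm_mx_stable_eigenspace _ GA) (comm_mx_stable_eigenspace _ GB) SK.
exists v => //; split => //; apply/matrixP => a r; rewrite [RHS]mxE.
have [->|ri] := eqVneq r i; last exact: SP0.
move/eqP: vP; rewrite mulmxN oppr_eq0 -col_mul => /eqP/colP/(_ a).
by rewrite !mxE.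
Qed.

Section Monad.
Variable R : realType.

Lemma monad_injective_eigen_eq0 k (M : monad R k) (v : 'rV_k) :
  monad_injective M -> v *m (mD M)^T = 0 ->
  stablemx v (mA M)^T -> stablemx v (mB M)^T -> v = 0.
Proof.
move=> inj vD /eigenvectorP[a /eigenspaceP vA].
move=> /eigenvectorP[b /eigenspaceP vB].
apply: trmx_inj; rewrite trmx0; apply: (inj b a); apply: trmx_inj.
rewrite trmx_mul trmxK !tr_col_mx !mul_mx_row !linearB /= !tr_scalar_mx.
by rewrite !mul_mx_scalar vA vB vD !subrr !row_mx0 trmx0.
Qed.

Lemma monad_surjective_eigen_eq0 k (M : monad R k) (u : 'rV_k) :
  monad_surjective M -> u *m mC M = 0 ->
  stablemx u (mA M) -> stablemx u (mB M) -> u = 0.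
Proof.
move=> surj uC /eigenvectorP[a /eigenspaceP uA].
move=> /eigenvectorP[b /eigenspaceP uB].
apply/rowP => j; have [z Nz] := surj b a (delta_mx j 0).
have : u *m (delta_mx j 0 : 'cV_k) = 0.
  rewrite -Nz mulmxA !mul_mx_row !mulmxBr !mul_mx_scalar uA uB uC !subrr.
  by rewrite !row_mx0 mul0mx.
by rewrite -colE => /colP/(_ 0); rewrite !mxE.
Qed.

Lemma expi_neq0 (x : R) : expi x != 0.
Proof.
apply/eqP => ex0.
have cx0 : cos x = 0 by have := congr1 (@complex.Re R) ex0.
have sx0 : sin x = 0 by have := congr1 (@complex.Im R) ex0.
have := cos2Dsin2 x; rewrite cx0 sx0 expr0n addr0 => /eqP.
by rewrite eq_sym oner_eq0.
Qed.

Lemma sin_neq0_Npipi (w : R) : - pi < w < pi -> w != 0 -> sin w != 0.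
Proof.
case/andP=> w_gtNpi w_ltpi; case: ltgtP => // [w_lt0 | w_gt0] _.
  have : 0 < - w < pi by apply/andP; split; lra.
  by move/sin_gt0_pi; rewrite sinN oppr_gt0 => /ltr0_neq0.
have : 0 < w < pi by apply/andP; split; lra.
by move/sin_gt0_pi/lt0r_neq0.
Qed.

Lemma qmat_unitmx (w : R) : qmat w \in unitmx.
Proof.
rewrite unitmxE det_diag unitfE !big_ord_recl big_ord0 mulr1.
by rewrite mulf_neq0 // !mxE expi_neq0.
Qed.

Lemma qmat_diag_injective (w : R) :
  sin w != 0 -> exists2 d : 'rV_2, qmat w = diag_mx d & injective (d 0).
Proof.
move=> sw_neq0.
exists (\row_(j < 2) if j == 0 then expi (- w) else expi w) => //.
have eNw_neq_ew : expi (- w) != expi w.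
  apply: contra sw_neq0 => /eqP/(congr1 (@complex.Im R)); rewrite /= sinN.
  by move=> Nsw_sw; apply/eqP; lra.
move=> r s; rewrite !mxE.
case: r s => [[|[|//]] ?] [[|[|//]] ?] //= => [_ | /eqP | /esym/eqP | _];
  rewrite ?(negPf eNw_neq_ew) //; exact: val_inj.
Qed.

Lemma phase_fixed_intertwiner k (w : R) (M : monad R k) :
  monad_equiv (phase w M) M -> exists g : 'M_k,
    [/\ comm_mx g (mA M), comm_mx g (mB M),
        g *m mC M = mC M *m qmat w & mD M *m g = qmat w *m mD M].
Proof.
case=> g [g_unit /= hA hB hC hD]; exists g; split.
- by rewrite /comm_mx {2}hA mulmxKV.
- by rewrite /comm_mx {2}hB mulmxKV.
- by rewrite {2}hC -mulmxA mulmxKV ?qmat_unitmx.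
- by rewrite {1}hD mulmxKV.
Qed.

End Monad.

Theorem mainTheorem3 (R : realType) (k : nat) (w : R) :
  (0 < k)%N -> - pi < w < pi -> w != 0 ->
  forall M : monad R k, nonsingular_monad M -> ~ monad_equiv (phase w M) M.
Proof.
move=> k_gt0 w_range w_neq0 M [[MK Minj Msurj] _].
case/phase_fixed_intertwiner=> g [gA gB gC Dg].
have [D0 | D_neq0] := eqVneq (mD M) 0.
  have AB : comm_mx (mA M)^T (mB M)^T.
    rewrite /comm_mx -!trmx_mul; congr trmx; apply/esym/eqP.
    by rewrite -subr_eq0 -[X in _ == X]MK D0 mulmx0 addr0.
  have [v v_neq0 /andP[vA vB]] := comm_mx_common_eigenvector k_gt0 AB.
  case/eqP: v_neq0; apply: monad_injective_eigen_eq0 Minj _ vA vB.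
  by rewrite D0 trmx0 mulmx0.
have [d qd d_inj] := qmat_diag_injective (sin_neq0_Npipi w_range w_neq0).
rewrite qd in gC Dg.
have [u u_neq0 [uC uA uB]] :=
  diag_intertwined_common_eigenvector d_inj gA gB gC Dg MK D_neq0.
by case/eqP: u_neq0; apply: monad_surjective_eigen_eq0 Msurj uC uA uB.
Qed.
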